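(* Let $(X,Y)$ be distributed according to an $(\alpha,\lambda)$-locally consistent RBM with $\alpha>0$. Then for every observed node $u$, the two-hop Markov neighborhood of $u$ equals $N_2(u)\setminus\{u\}$.
   Context: A Restricted Boltzmann Machine (RBM) with $n$ observed variables $X\in\{\pm1\}^n$ (indexed by $V_{obs}=[n]$) and $m$ latent variables $Y\in\{\pm1\}^m$ (indexed by $V_{lat}=[m]$) is the distribution $\Pr[X=x,Y=y]=\frac1Z\exp(x^TJy+h^Tx+g^Ty)$, where $J\in\mathbb R^{n\times m}$, $h\in\mathbb R^n$, $g\in\mathbb R^m$ are arbitrary and $Z$ is the normalizing constant. Its edge set is $E=\{(i,j):J_{ij}\neq0\}$. The RBM is $(\alpha,\lambda)$-locally consistent if: (i) for each $j\in[m]$, either $J_{ij}\ge0$ for all $i$ or $J_{ij}\le0$ for all $i$; (ii) $|J_{ij}|\ge\alpha$ for every $(i,j)\in E$; (iii) $\sum_j|J_{ij}|+|h_i|\le\lambda$ for all $i\in[n]$; (iv) $\sum_i|J_{ij}|+|g_j|\le\lambda$ for all $j\in[m]$. $N_2(u)=\{i\in V_{obs}:\exists j\in[m],\ J_{ij}\ne0,\ J_{uj}\neq0\}$. The two-hop Markov neighborhood of $u$ is the smallest set $S\subseteq V_{obs}\setminus\{u\}$ such that, conditioned on $X_S$, $X_u$ is independent of $X_v$ for every $v\in V_{obs}\setminus(S\cup\{u\})$. *)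

From HB Require Import structures.
From Stdlib Require Import Reals.
From mathcomp Require Import all_boot.

Set Implicit Arguments.
Unset Strict Implicit.
Unset Printing Implicit Defensive.
Local Open Scope R_scope.

Lemma Rplus_assoc' : associative Rplus.
Proof. move=> a b c; symmetry; exact: Rplus_assoc. Qed.
HB.instance Definition _ :=
  Monoid.isComLaw.Build R 0 Rplus Rplus_assoc' Rplus_comm Rplus_0_l.


Definition spin (b : bool) : R := if b then 1 else (-1).

Definition nzb (r : R) : bool := if Req_EM_T r 0 then false else true.

Section RBM.
Variables (n m : nat) (J : 'I_n -> 'I_m -> R) (h : 'I_n -> R) (g : 'I_m -> R).

Definition obs := {ffun 'I_n -> bool}.
Definition lat := {ffun 'I_m -> bool}.

Definition rbm_weight (x : obs) (y : lat) : R :=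
  exp (\big[Rplus/0]_(i < n) \big[Rplus/0]_(j < m)
          (spin (x i) * J i j * spin (y j))
       + \big[Rplus/0]_(i < n) (h i * spin (x i))
       + \big[Rplus/0]_(j < m) (g j * spin (y j))).

Definition rbm_Z : R :=
  \big[Rplus/0]_(x : obs) \big[Rplus/0]_(y : lat) rbm_weight x y.

Definition rbm_prob (x : obs) (y : lat) : R := (rbm_weight x y / rbm_Z).

Definition probX (E : pred obs) : R :=
  \big[Rplus/0]_(x : obs | E x) \big[Rplus/0]_(y : lat) rbm_prob x y.

Definition agree (S : {set 'I_n}) (s : obs) : pred obs :=
  fun x => [forall i in S, x i == s i].

Definition cond_indep (u v : 'I_n) (S : {set 'I_n}) : Prop :=
  forall (a b : bool) (s : obs),
    (probX (fun x => [&& x u == a, x v == b & agree S s x]) * probX (agree S s))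
    = (probX (fun x => (x u == a) && agree S s x)
       * probX (fun x => (x v == b) && agree S s x)).

Definition markov_blanket_prop (u : 'I_n) (S : {set 'I_n}) : Prop :=
  u \notin S /\
  forall v : 'I_n, v != u -> v \notin S -> cond_indep u v S.

Definition is_two_hop_markov_nbhd (u : 'I_n) (S : {set 'I_n}) : Prop :=
  markov_blanket_prop u S /\
  forall S' : {set 'I_n}, markov_blanket_prop u S' -> S \subset S'.

Definition N2 (u : 'I_n) : {set 'I_n} :=
  [set i | [exists j : 'I_m, nzb (J i j) && nzb (J u j)]].

Definition locally_consistent (alpha lambda : R) : Prop :=
  (forall j : 'I_m, (forall i, 0 <= J i j) \/ (forall i, J i j <= 0)) /\
  (forall i j, J i j <> 0 -> (alpha <= Rabs (J i j))) /\
  (forall i : 'I_n,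
     (\big[Rplus/0]_(j < m) Rabs (J i j) + Rabs (h i) <= lambda)) /\
  (forall j : 'I_m,
     (\big[Rplus/0]_(i < n) Rabs (J i j) + Rabs (g j) <= lambda)).

End RBM.

From HB Require Import structures.
From Stdlib Require Import Reals Lra.
From mathcomp Require Import all_boot.

Set Implicit Arguments.
Unset Strict Implicit.
Unset Printing Implicit Defensive.
Local Open Scope R_scope.

(* If two observed configurations agree on [N_2(u) \ u], then
   exchanging their spins at [u] together with the latent spins adjacent to
   [u] preserves the total energy of the pair ([energy_swap]). Summing over
   the latent spins, the product of the marginals is invariant under this
   exchange ([marginal_swap]), and reindexing pairs of configurations by it
   gives the conditional independence identity ([cond_indep_N2]).

   By the sign condition, flipping the latent spins of negative
   columns makes the RBM a ferromagnet on the lattice of configurations of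
   all sites, so its law is log-supermodular ([log_supermodular_mu]). The
   FKG inequality, proved by the classical induction over free coordinates
   ([fkg]), together with a strict refinement ([fcov_gt0_pivot], [fcov_gt0])
   shows that two observed nodes sharing a latent neighbour are strictly
   positively correlated given any set of other observed spins
   ([correlation_gt0]); hence every separating set contains [N_2(u) \ u]
   ([not_cond_indep]). *)

Section RealSums.
Variable I : finType.

Lemma sumR_ge0 (P : pred I) (F : I -> R) :
  (forall i, P i -> 0 <= F i) -> 0 <= \big[Rplus/0]_(i | P i) F i.
Proof.
move=> F_ge0; apply: (big_ind (fun x => 0 <= x)) => //; first lra.
by move=> x y; lra.
Qed.

Lemma sumR_le (P : pred I) (F G : I -> R) :
  (forall i, P i -> F i <= G i) ->
  \big[Rplus/0]_(i | P i) F i <= \big[Rplus/0]_(i | P i) G i.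
Proof.
move=> FG; apply: (big_ind2 (fun x y => x <= y)) => //; first lra.
by move=> x1 x2 y1 y2; lra.
Qed.

Lemma sumR_lt (P : pred I) (F G : I -> R) i0 :
  (forall i, P i -> F i <= G i) -> P i0 -> F i0 < G i0 ->
  \big[Rplus/0]_(i | P i) F i < \big[Rplus/0]_(i | P i) G i.
Proof.
move=> FG Pi0 FG0; rewrite (bigD1 i0) //= [X in _ < X](bigD1 i0) //=.
have : \big[Rplus/0]_(i | P i && (i != i0)) F i <=
       \big[Rplus/0]_(i | P i && (i != i0)) G i.
  by apply: sumR_le => i /andP[Pi _]; apply: FG.
lra.
Qed.

Lemma sumR_gt0 (P : pred I) (F : I -> R) i0 :
  (forall i, P i -> 0 <= F i) -> P i0 -> 0 < F i0 ->
  0 < \big[Rplus/0]_(i | P i) F i.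
Proof.
by move=> F_ge0 Pi0 Fi0; have := @sumR_lt P (fun=> 0) F i0; rewrite big1 //; apply.
Qed.

Lemma sumR_mull (P : pred I) (F : I -> R) a :
  a * \big[Rplus/0]_(i | P i) F i = \big[Rplus/0]_(i | P i) (a * F i).
Proof. by rewrite (big_endo (fun x => a * x)) //; [move=> x y; ring | ring]. Qed.

Lemma sumR_mulr (P : pred I) (F : I -> R) a :
  \big[Rplus/0]_(i | P i) F i * a = \big[Rplus/0]_(i | P i) (F i * a).
Proof. by rewrite Rmult_comm sumR_mull; apply: eq_bigr => i _; ring. Qed.

End RealSums.

Lemma cross_div_le a b a' b' : 0 < b -> 0 < b' -> a * b <= a' * b' -> a / b' <= a' / b.
Proof.
move=> b_gt0 b'_gt0 cross; apply: (Rmult_le_reg_r (b * b')); first exact: Rmult_lt_0_compat.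
have -> : a / b' * (b * b') = a * b by field; apply: Rgt_not_eq.
have -> : a' / b * (b * b') = a' * b' by field; apply: Rgt_not_eq.
exact: cross.
Qed.

Lemma cross_div_lt a b a' b' : 0 < b -> 0 < b' -> a * b < a' * b' -> a / b' < a' / b.
Proof.
move=> b_gt0 b'_gt0 cross; apply: (Rmult_lt_reg_r (b * b')); first exact: Rmult_lt_0_compat.
have -> : a / b' * (b * b') = a * b by field; apply: Rgt_not_eq.
have -> : a' / b * (b * b') = a' * b' by field; apply: Rgt_not_eq.
exact: cross.
Qed.

Section Lattice.
Variable T : finType.

Definition config := {ffun T -> bool}.

Definition upd (c : config) (k : T) (b : bool) : config :=
  [ffun k' => if k' == k then b else c k'].

Definition cfg_join (c d : config) : config := [ffun k => c k || d k].
Definition cfg_meet (c d : config) : config := [ffun k => c k && d k].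
Definition cfg_le (c d : config) := forall k, c k ==> d k.

Definition monotone (f : config -> R) := forall c d, cfg_le c d -> f c <= f d.
Definition positive (mu : config -> R) := forall c, 0 < mu c.
Definition log_supermodular (mu : config -> R) :=
  forall c d, mu c * mu d <= mu (cfg_join c d) * mu (cfg_meet c d).

Definition pin (F : config -> R) (k : T) (b : bool) : config -> R :=
  fun c => F (upd c k b).
Definition ratio (mu : config -> R) (k : T) : config -> R :=
  fun c => mu (upd c k true) / mu (upd c k false).

Implicit Types (A : {set T}) (k : T) (b : bool) (c d z : config)
  (F mu f g : config -> R).

Lemma updE c k b k' : upd c k b k' = if k' == k then b else c k'.
Proof. by rewrite ffunE. Qed.

Lemma upd_id c k : upd c k (c k) = c.
Proof. by apply/ffunP => k'; rewrite updE; case: eqP => [->|]. Qed.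

Lemma upd_upd c k b b' : upd (upd c k b) k b' = upd c k b'.
Proof. by apply/ffunP => k'; rewrite !updE; case: eqP. Qed.

Lemma updC c k1 k2 b1 b2 : k1 != k2 ->
  upd (upd c k1 b1) k2 b2 = upd (upd c k2 b2) k1 b1.
Proof.
move=> k12; apply/ffunP => k; rewrite !updE.
by case: (k =P k1) => [->|//]; rewrite (negbTE k12).
Qed.

Lemma join_upd c d k b b' :
  cfg_join (upd c k b) (upd d k b') = upd (cfg_join c d) k (b || b').
Proof. by apply/ffunP => k'; rewrite !ffunE; case: eqP. Qed.

Lemma meet_upd c d k b b' :
  cfg_meet (upd c k b) (upd d k b') = upd (cfg_meet c d) k (b && b').
Proof. by apply/ffunP => k'; rewrite !ffunE; case: eqP. Qed.

Lemma join_le c d : cfg_le c d -> cfg_join c d = d.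
Proof.
by move=> cd; apply/ffunP => k; rewrite ffunE; have := cd k; case: (c k); case: (d k).
Qed.

Lemma meet_le c d : cfg_le c d -> cfg_meet c d = c.
Proof.
by move=> cd; apply/ffunP => k; rewrite ffunE; have := cd k; case: (c k); case: (d k).
Qed.

Lemma cfg_le_upd c d k b : cfg_le c d -> cfg_le (upd c k b) (upd d k b).
Proof. by move=> cd k'; rewrite !updE; case: eqP => _; [apply: implybb | apply: cd]. Qed.

Lemma upd_false_le_true c k : cfg_le (upd c k false) (upd c k true).
Proof. by move=> k'; rewrite !updE; case: eqP => _ //; apply: implybb. Qed.

Lemma positive_pin mu k b : positive mu -> positive (pin mu k b).
Proof. by move=> mu_gt0 c; apply: mu_gt0. Qed.

Lemma log_supermodular_pin mu k b :
  log_supermodular mu -> log_supermodular (pin mu k b).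
Proof.
move=> lsm_mu c d; rewrite /pin.
by have := lsm_mu (upd c k b) (upd d k b); rewrite join_upd meet_upd orbb andbb.
Qed.

Lemma monotone_pin f k b : monotone f -> monotone (pin f k b).
Proof. by move=> mono_f c d cd; apply: mono_f; apply: cfg_le_upd. Qed.

Lemma monotone_ratio mu k :
  positive mu -> log_supermodular mu -> monotone (ratio mu k).
Proof.
move=> mu_gt0 lsm_mu c d cd; apply: cross_div_le; try exact: mu_gt0.
by have := lsm_mu (upd c k true) (upd d k false);
   rewrite join_upd meet_upd join_le // meet_le.
Qed.

(* Sums over the "fiber" of configurations that agree with [z] outside [A]:
   these are unnormalised expectations for the weight conditioned on the
   coordinates outside [A]. *)
Definition fixed_outside (A : {set T}) (z c : config) : bool :=
  [forall k, (k \notin A) ==> (c k == z k)].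
Definition fsum (A : {set T}) (z : config) (F : config -> R) : R :=
  \big[Rplus/0]_(c | fixed_outside A z c) F c.

(* Unnormalised covariance of [f] and [g] on the fiber, and the increase of
   the conditional mean of [f] when coordinate [k] switches from false to
   true (both multiplied by positive normalising factors). *)
Definition fcov (A : {set T}) (z : config) (mu f g : config -> R) : R :=
  fsum A z (fun c => mu c * (f c * g c)) * fsum A z mu
  - fsum A z (fun c => mu c * f c) * fsum A z (fun c => mu c * g c).
Definition fshift (A : {set T}) (k : T) (z : config) (mu f : config -> R) : R :=
  fsum A z (fun c => mu (upd c k true) * f (upd c k true))
    * fsum A z (fun c => mu (upd c k false))
  - fsum A z (fun c => mu (upd c k false) * f (upd c k false))
    * fsum A z (fun c => mu (upd c k true)).

Lemma fixed_outside_refl A z : fixed_outside A z z.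
Proof. by apply/forallP => k; apply/implyP. Qed.

Lemma fsum_split A k z F : k \notin A ->
  fsum (k |: A) z F = fsum A z (pin F k true) + fsum A z (pin F k false).
Proof.
move=> kA; rewrite {1}/fsum (bigID (fun c : config => c k)) /=.
suff slice b : \big[Rplus/0]_(c | fixed_outside (k |: A) z c && (c k == b)) F c
    = fsum A z (pin F k b).
  by rewrite -(slice true) -(slice false); congr (_ + _); apply: eq_bigl => c;
     rewrite ?eqb_id ?eqbF_neg.
rewrite (reindex_onto (fun c => upd c k b) (fun c => upd c k (z k))); last first.
  by move=> c /andP[_ /eqP <-]; rewrite upd_upd upd_id.
apply: eq_bigl => d; rewrite updE eqxx eqxx andbT upd_upd.
apply/andP/forallP => [[/forallP out_kA /eqP dk] k'|out_A].
  apply/implyP => k'A; have := congr1 (fun c : config => c k') dk.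
  rewrite updE; case: eqP => [-> <-|/eqP k'k _]; first exact: eqxx.
  have := implyP (out_kA k'); rewrite in_setU1 negb_or k'k k'A updE (negbTE k'k).
  by move/(_ isT).
split; last by apply/eqP/ffunP => k'; rewrite updE; case: eqP => [->|//];
  rewrite (eqP (implyP (out_A k) kA)).
apply/forallP => k'; apply/implyP; rewrite in_setU1 negb_or => /andP[k'k k'A].
by rewrite updE (negbTE k'k) (implyP (out_A k')).
Qed.

Lemma fsum_ext A z F G : (forall c, F c = G c) -> fsum A z F = fsum A z G.
Proof. by move=> FG; apply: eq_bigr => c _; apply: FG. Qed.

Lemma fsum_sub A z F G :
  fsum A z (fun c => F c - G c) = fsum A z F - fsum A z G.
Proof.
suff : fsum A z (fun c => F c - G c) + fsum A z G = fsum A z F by lra.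
by rewrite /fsum -big_split; apply: eq_bigr => c _ /=; ring.
Qed.

Lemma fsum_ge0 A z F : (forall c, 0 <= F c) -> 0 <= fsum A z F.
Proof. by move=> F_ge0; apply: sumR_ge0 => c _; apply: F_ge0. Qed.

Lemma fsum_gt0 A z F : (forall c, 0 < F c) -> 0 < fsum A z F.
Proof.
move=> F_gt0; apply: (sumR_gt0 (i0 := z)) => [c _||]; last exact: F_gt0.
  exact: Rlt_le.
exact: fixed_outside_refl.
Qed.

Lemma fsum_set0 z F : fsum set0 z F = F z.
Proof.
rewrite /fsum (big_pred1 z) // => c; apply/forallP/eqP => [fixed|->].
  by apply/ffunP => k; apply/eqP; apply: (implyP (fixed k)); rewrite in_set0.
by move=> k; apply/implyP.
Qed.

(* One step of the classical proof of the FKG inequality: the covariance on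
   [k |: A] is a positive combination of the covariances on the two halves
   [k = true], [k = false] and of the product of the two shifts at [k]. *)
Lemma fcov_split A k z mu f g : k \notin A ->
  fcov (k |: A) z mu f g
    * (fsum A z (pin mu k false) * fsum A z (pin mu k true)) =
  fcov A z (pin mu k true) (pin f k true) (pin g k true)
    * (fsum A z (pin mu k false) * (fsum A z (pin mu k true) + fsum A z (pin mu k false)))
  + fcov A z (pin mu k false) (pin f k false) (pin g k false)
    * (fsum A z (pin mu k true) * (fsum A z (pin mu k true) + fsum A z (pin mu k false)))
  + fshift A k z mu f * fshift A k z mu g.
Proof. by move=> kA; rewrite /fcov /fshift !fsum_split // /pin; ring. Qed.

Lemma fshift_decomp A k z mu f : positive mu ->
  fshift A k z mu f =
  fcov A z (pin mu k false) (pin f k true) (ratio mu k)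
  + fsum A z (fun c => mu (upd c k false) * (f (upd c k true) - f (upd c k false)))
    * fsum A z (pin mu k true).
Proof.
move=> mu_gt0.
have odds c : mu (upd c k false) * ratio mu k c = mu (upd c k true).
  by rewrite /ratio; field; apply: Rgt_not_eq; apply: mu_gt0.
rewrite (fsum_ext _ _ (fun c => Rmult_minus_distr_l _ _ _)) fsum_sub /fcov.
rewrite (@fsum_ext A z (fun c => pin mu k false c * (pin f k true c * ratio mu k c))
                       (pin (fun c => mu c * f c) k true)); last first.
  by move=> c; rewrite /pin /= -odds (Rmult_comm (f _)) Rmult_assoc.
rewrite (@fsum_ext A z (fun c => pin mu k false c * ratio mu k c) (pin mu k true)) //.
by rewrite /fshift /pin; ring.
Qed.

Definition fkg_on A := forall z mu f g,
  positive mu -> log_supermodular mu -> monotone f -> monotone g ->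
  0 <= fcov A z mu f g.

Lemma mean_increase_ge0 A z mu f k : positive mu -> monotone f ->
  0 <= fsum A z (fun c => mu (upd c k false) * (f (upd c k true) - f (upd c k false))).
Proof.
move=> mu_gt0 mono_f; apply: fsum_ge0 => c; apply: Rmult_le_pos.
  exact: Rlt_le.
by have := mono_f _ _ (upd_false_le_true c k); lra.
Qed.

Lemma fshift_ge0 A k z mu f : fkg_on A ->
  positive mu -> log_supermodular mu -> monotone f -> 0 <= fshift A k z mu f.
Proof.
move=> fkgA mu_gt0 lsm_mu mono_f; rewrite fshift_decomp //.
apply: Rplus_le_le_0_compat.
  apply: fkgA; [exact: positive_pin | exact: log_supermodular_pin |
                exact: monotone_pin | exact: monotone_ratio].
apply: Rmult_le_pos; first exact: mean_increase_ge0.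
apply: Rlt_le; apply: fsum_gt0; exact: positive_pin.
Qed.

Lemma fcov_ge_shifts A k z mu f g : k \notin A -> fkg_on A ->
  positive mu -> log_supermodular mu -> monotone f -> monotone g ->
  fshift A k z mu f * fshift A k z mu g <=
  fcov (k |: A) z mu f g * (fsum A z (pin mu k false) * fsum A z (pin mu k true)).
Proof.
move=> kA fkgA mu_gt0 lsm_mu mono_f mono_g; rewrite fcov_split //.
have M_gt0 b : 0 < fsum A z (pin mu k b) by apply: fsum_gt0; apply: positive_pin.
have cov_ge0 b : 0 <= fcov A z (pin mu k b) (pin f k b) (pin g k b).
  by apply: fkgA; [exact: positive_pin | exact: log_supermodular_pin |
                   exact: monotone_pin | exact: monotone_pin].
have := M_gt0 true; have := M_gt0 false; have := cov_ge0 true; have := cov_ge0 false.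
set M0 := fsum A z (pin mu k false); set M1 := fsum A z (pin mu k true).
move=> cov0 cov1 M0_gt0 M1_gt0.
suff : 0 <= fcov A z (pin mu k true) (pin f k true) (pin g k true) * (M0 * (M1 + M0))
          + fcov A z (pin mu k false) (pin f k false) (pin g k false) * (M1 * (M1 + M0)).
  by lra.
by apply: Rplus_le_le_0_compat; apply: Rmult_le_pos => //; nra.
Qed.

Lemma fkg_on_step A k : k \notin A -> fkg_on A -> fkg_on (k |: A).
Proof.
move=> kA fkgA z mu f g mu_gt0 lsm_mu mono_f mono_g.
have M_gt0 : 0 < fsum A z (pin mu k false) * fsum A z (pin mu k true).
  by apply: Rmult_lt_0_compat; apply: fsum_gt0; apply: positive_pin.
apply: (Rmult_le_reg_r _ _ _ M_gt0); rewrite Rmult_0_l.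
apply: Rle_trans (fcov_ge_shifts z kA fkgA mu_gt0 lsm_mu mono_f mono_g).
by apply: Rmult_le_pos; apply: fshift_ge0.
Qed.

Theorem fkg A : fkg_on A.
Proof.
move: {2}#|A| (erefl #|A|) => N; elim: N A => [|N IHN] A cardA.
  move: cardA => /eqP; rewrite cards_eq0 => /eqP -> z mu f g _ _ _ _.
  by rewrite /fcov !fsum_set0; lra.
have [k kA] : exists k, k \in A by apply/card_gt0P; rewrite cardA.
rewrite -(setD1K kA); apply: fkg_on_step; first by rewrite !inE eqxx.
by apply: IHN; move: cardA; rewrite (cardsD1 k A) kA => -[].
Qed.

Lemma fshift_gt0_jump A k z mu f :
  positive mu -> log_supermodular mu -> monotone f ->
  (forall c, f (upd c k false) < f (upd c k true)) -> 0 < fshift A k z mu f.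
Proof.
move=> mu_gt0 lsm_mu mono_f jump; rewrite fshift_decomp //.
apply: Rplus_le_lt_0_compat.
  apply: fkg; [exact: positive_pin | exact: log_supermodular_pin |
               exact: monotone_pin | exact: monotone_ratio].
apply: Rmult_lt_0_compat; last by apply: fsum_gt0; exact: positive_pin.
by apply: fsum_gt0 => c; apply: Rmult_lt_0_compat => //; have := jump c; lra.
Qed.

Lemma fshift_gt0_cov A k z mu f :
  positive mu -> log_supermodular mu -> monotone f ->
  0 < fcov A z (pin mu k false) (pin f k true) (ratio mu k) ->
  0 < fshift A k z mu f.
Proof.
move=> mu_gt0 lsm_mu mono_f cov_gt0; rewrite fshift_decomp //.
apply: Rplus_lt_le_0_compat => //; apply: Rmult_le_pos.
  exact: mean_increase_ge0.
apply: Rlt_le; apply: fsum_gt0; exact: positive_pin.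
Qed.

Lemma fcov_gt0 A k z mu f g : k \notin A ->
  positive mu -> log_supermodular mu -> monotone f -> monotone g ->
  0 < fshift A k z mu f -> 0 < fshift A k z mu g -> 0 < fcov (k |: A) z mu f g.
Proof.
move=> kA mu_gt0 lsm_mu mono_f mono_g shift_f shift_g.
have M_gt0 : 0 < fsum A z (pin mu k false) * fsum A z (pin mu k true).
  by apply: Rmult_lt_0_compat; apply: fsum_gt0; apply: positive_pin.
apply: (Rmult_lt_reg_r _ _ _ M_gt0); rewrite Rmult_0_l.
apply: Rlt_le_trans (fcov_ge_shifts z kA (fkg A) mu_gt0 lsm_mu mono_f mono_g).
exact: Rmult_lt_0_compat.
Qed.

Lemma fcov_gt0_pivot A k z mu f g : k \notin A ->
  positive mu -> log_supermodular mu -> monotone f -> monotone g ->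
  (forall c, f (upd c k false) < f (upd c k true)) ->
  0 < fcov A z (pin mu k false) (pin g k true) (ratio mu k) ->
  0 < fcov (k |: A) z mu f g.
Proof.
move=> kA mu_gt0 lsm_mu mono_f mono_g jump cov_gt0.
by apply: fcov_gt0 => //; [apply: fshift_gt0_jump | apply: fshift_gt0_cov].
Qed.

End Lattice.

(* The defect of supermodularity of a product of two spins at one pair of
   sites: nonnegative, and positive when the two configurations cross. *)
Definition pair_gap (a b a' b' : bool) : R :=
  spin (a || b) * spin (a' || b') + spin (a && b) * spin (a' && b')
  - spin a * spin a' - spin b * spin b'.

Lemma pair_gap_ge0 a b a' b' : 0 <= pair_gap a b a' b'.
Proof. by case: a; case: b; case: a'; case: b'; rewrite /pair_gap /spin /=; lra. Qed.

Lemma pair_gap_cross : 0 < pair_gap true false false true.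
Proof. rewrite /pair_gap /spin /=; lra. Qed.

Lemma spin_join_meet a b : spin (a || b) + spin (a && b) = spin a + spin b.
Proof. by case: a; case: b; rewrite /spin /=; lra. Qed.

Lemma exp_le a b : a <= b -> exp a <= exp b.
Proof. by case=> [ab|->]; [apply: Rlt_le; apply: exp_increasing | apply: Rle_refl]. Qed.

Lemma Z_gt0 n m (J : 'I_n -> 'I_m -> R) h g : 0 < rbm_Z J h g.
Proof.
have w_gt0 x y : 0 < rbm_weight J h g x y by apply: exp_pos.
have row_gt0 x : 0 < \big[Rplus/0]_(y : lat m) rbm_weight J h g x y.
  by apply: (sumR_gt0 (i0 := [ffun=> true])) => // y _; apply: Rlt_le.
by apply: (sumR_gt0 (i0 := [ffun=> true])) => // x _; apply: Rlt_le.
Qed.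

Lemma exp_sum_div n m (J : 'I_n -> 'I_m -> R) h g a b :
  exp a / rbm_Z J h g * (exp b / rbm_Z J h g) =
  exp (a + b) * / (rbm_Z J h g * rbm_Z J h g).
Proof. by rewrite exp_plus; field; apply: Rgt_not_eq; apply: Z_gt0. Qed.

Definition ind (b : bool) : R := if b then 1 else 0.

Section Ferromagnet.
Variables (n m : nat) (J : 'I_n -> 'I_m -> R) (h : 'I_n -> R) (g : 'I_m -> R).
Hypothesis sign_consistent :
  forall j, (forall i, 0 <= J i j) \/ (forall i, J i j <= 0).

Definition site := ('I_n + 'I_m)%type.

(* Flipping the latent spins of the columns with a negative coupling turns the
   RBM into a ferromagnet, whose couplings [J i j * eps j] are nonnegative. *)
Definition neg_col (j : 'I_m) : bool :=
  [exists i : 'I_n, if Rlt_dec (J i j) 0 then true else false].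
Definition eps (j : 'I_m) : R := if neg_col j then -1 else 1.
Definition Jf (i : 'I_n) (j : 'I_m) : R := J i j * eps j.

Lemma Jf_ge0 i j : 0 <= Jf i j.
Proof.
rewrite /Jf /eps /neg_col; case: existsP => [[i0]|no_neg].
  case: Rlt_dec => // lt _; case: (sign_consistent j) => sgn; last by have := sgn i; lra.
  by have := sgn i0; lra.
have : ~ J i j < 0 by move=> lt; apply: no_neg; exists i; case: Rlt_dec.
lra.
Qed.

Lemma Jf_gt0 i j : J i j <> 0 -> 0 < Jf i j.
Proof. by move=> nz; have := Jf_ge0 i j; rewrite /Jf /eps; case: neg_col; lra. Qed.

Definition decode (c : config site) : obs n * lat m :=
  ([ffun i => c (inl i)], [ffun j => c (inr j) (+) neg_col j]).
Definition encode (p : obs n * lat m) : config site :=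
  [ffun k => match k with inl i => p.1 i | inr j => p.2 j (+) neg_col j end].

Lemma decodeK : cancel decode encode.
Proof. by move=> c; apply/ffunP => [[i|j]]; rewrite !ffunE //= addbK. Qed.

Lemma encodeK : cancel encode decode.
Proof.
by move=> [x y]; congr (_, _); apply/ffunP => i; rewrite !ffunE //= addbK.
Qed.

Definition mu (c : config site) : R := rbm_prob J h g (decode c).1 (decode c).2.

Definition energy (c : config site) : R :=
  \big[Rplus/0]_(i < n) \big[Rplus/0]_(j < m)
     (Jf i j * spin (c (inl i)) * spin (c (inr j)))
  + \big[Rplus/0]_(i < n) (h i * spin (c (inl i)))
  + \big[Rplus/0]_(j < m) (g j * eps j * spin (c (inr j))).

Lemma mu_exp (c : config site) : mu c = exp (energy c) / rbm_Z J h g.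
Proof.
have spin_flip b j : spin (b (+) neg_col j) = eps j * spin b.
  by rewrite /eps; case: neg_col; case: b; rewrite /spin /=; lra.
rewrite /mu /rbm_prob /rbm_weight /energy; congr (exp (_ + _ + _) / _).
- by apply: eq_bigr => i _; apply: eq_bigr => j _; rewrite /= !ffunE spin_flip /Jf; ring.
- by apply: eq_bigr => i _; rewrite ffunE.
- by apply: eq_bigr => j _; rewrite /= ffunE spin_flip; ring.
Qed.

Lemma positive_mu : positive mu.
Proof.
by move=> c; rewrite mu_exp; apply: Rdiv_lt_0_compat; [apply: exp_pos | apply: Z_gt0].
Qed.

(* The energy is supermodular: its defect is a nonnegative combination of
   the pair defects, positive as soon as [c] and [d] cross along an edge. *)
Definition crossing_defect (c d : config site) : R :=
  \big[Rplus/0]_(i < n) \big[Rplus/0]_(j < m)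
     (Jf i j * pair_gap (c (inl i)) (d (inl i)) (c (inr j)) (d (inr j))).

Lemma energy_gap (c d : config site) :
  energy (cfg_join c d) + energy (cfg_meet c d) =
  energy c + energy d + crossing_defect c d.
Proof.
have pairs :
  \big[Rplus/0]_(i < n) \big[Rplus/0]_(j < m)
     (Jf i j * spin (cfg_join c d (inl i)) * spin (cfg_join c d (inr j)))
  + \big[Rplus/0]_(i < n) \big[Rplus/0]_(j < m)
     (Jf i j * spin (cfg_meet c d (inl i)) * spin (cfg_meet c d (inr j)))
  = \big[Rplus/0]_(i < n) \big[Rplus/0]_(j < m)
     (Jf i j * spin (c (inl i)) * spin (c (inr j)))
  + \big[Rplus/0]_(i < n) \big[Rplus/0]_(j < m)
     (Jf i j * spin (d (inl i)) * spin (d (inr j)))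
  + crossing_defect c d.
  rewrite /crossing_defect -!big_split; apply: eq_bigr => i _; rewrite -!big_split.
  by apply: eq_bigr => j _; rewrite !ffunE /pair_gap /=; ring.
have fields_obs :
  \big[Rplus/0]_(i < n) (h i * spin (cfg_join c d (inl i)))
  + \big[Rplus/0]_(i < n) (h i * spin (cfg_meet c d (inl i)))
  = \big[Rplus/0]_(i < n) (h i * spin (c (inl i)))
  + \big[Rplus/0]_(i < n) (h i * spin (d (inl i))).
  rewrite -!big_split; apply: eq_bigr => i _ /=.
  by rewrite !ffunE -!Rmult_plus_distr_l spin_join_meet.
have fields_lat :
  \big[Rplus/0]_(j < m) (g j * eps j * spin (cfg_join c d (inr j)))
  + \big[Rplus/0]_(j < m) (g j * eps j * spin (cfg_meet c d (inr j)))
  = \big[Rplus/0]_(j < m) (g j * eps j * spin (c (inr j)))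
  + \big[Rplus/0]_(j < m) (g j * eps j * spin (d (inr j))).
  rewrite -!big_split; apply: eq_bigr => j _ /=.
  by rewrite !ffunE -!Rmult_plus_distr_l spin_join_meet.
rewrite /energy; lra.
Qed.

Lemma crossing_defect_ge0 (c d : config site) : 0 <= crossing_defect c d.
Proof.
apply: sumR_ge0 => i _; apply: sumR_ge0 => j _.
by apply: Rmult_le_pos; [apply: Jf_ge0 | apply: pair_gap_ge0].
Qed.

Lemma crossing_defect_gt0 (c d : config site) i j : J i j <> 0 ->
  c (inl i) = true -> d (inl i) = false -> c (inr j) = false -> d (inr j) = true ->
  0 < crossing_defect c d.
Proof.
move=> nz ci di cj dj.
have gap_ge0 i' j' :
    0 <= Jf i' j' * pair_gap (c (inl i')) (d (inl i')) (c (inr j')) (d (inr j')).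
  by apply: Rmult_le_pos; [apply: Jf_ge0 | apply: pair_gap_ge0].
apply: (sumR_gt0 (i0 := i)) => // [i' _|]; first by apply: sumR_ge0.
apply: (sumR_gt0 (i0 := j)) => //; rewrite ci di cj dj.
by apply: Rmult_lt_0_compat; [apply: Jf_gt0 | apply: pair_gap_cross].
Qed.

Lemma log_supermodular_mu : log_supermodular mu.
Proof.
move=> c d; rewrite !mu_exp !exp_sum_div; apply: Rmult_le_compat_r.
  by apply: Rlt_le; apply: Rinv_0_lt_compat; have := Z_gt0 J h g; nra.
by apply: exp_le; rewrite energy_gap; have := crossing_defect_ge0 c d; lra.
Qed.

Lemma mu_cross (c d : config site) i j : J i j <> 0 ->
  c (inl i) = true -> d (inl i) = false -> c (inr j) = false -> d (inr j) = true ->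
  mu c * mu d < mu (cfg_join c d) * mu (cfg_meet c d).
Proof.
move=> nz ci di cj dj; rewrite !mu_exp !exp_sum_div; apply: Rmult_lt_compat_r.
  by apply: Rinv_0_lt_compat; have := Z_gt0 J h g; nra.
apply: exp_increasing; rewrite energy_gap.
by have := crossing_defect_gt0 nz ci di cj dj; lra.
Qed.

Lemma odds_strict (c : config site) i j : J i j <> 0 ->
  ratio mu (inl i) (upd c (inr j) false) < ratio mu (inl i) (upd c (inr j) true).
Proof.
move=> nz; apply: cross_div_lt; try exact: positive_mu.
have := mu_cross (c := upd (upd c (inr j) false) (inl i) true)
                 (d := upd (upd c (inr j) true) (inl i) false) nz.
have le := upd_false_le_true c (inr j).
by rewrite join_upd meet_upd join_le // meet_le // !updE !eqxx /=; apply.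
Qed.

Lemma monotone_ind (k : site) : monotone (fun c : config site => ind (c k)).
Proof. by move=> c d cd; have := cd k; case: (c k); case: (d k); rewrite /ind //=; lra. Qed.

Lemma ind_jump (k : site) (c : config site) : ind (upd c k false k) < ind (upd c k true k).
Proof. by rewrite !updE eqxx /ind; lra. Qed.

Definition free_sites (S : {set 'I_n}) : {set site} :=
  [set k : site | if k is inl i then i \notin S else true].

(* The odds of [u] (with [v] up) and the odds of [v] (with [u] down) are
   strictly positively correlated on any fiber where the common latent
   neighbour [j] is free: both jump strictly with the spin of [j]. *)
Lemma odds_correlation_gt0 (A : {set site}) (z : config site) u v j :
  inr j \notin A -> u != v -> J u j <> 0 -> J v j <> 0 ->
  0 < fcov (inr j |: A) z (pin (pin mu (inl u) false) (inl v) false)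
          (pin (ratio mu (inl u)) (inl v) true) (ratio (pin mu (inl u) false) (inl v)).
Proof.
move=> jA uv nz_u nz_v.
set ku : site := inl u; set kv : site := inl v; set kj : site := inr j.
have kvu : kv != ku by apply: contra uv => /eqP[->].
have kjv : kj != kv by [].
have kju : kj != ku by [].
have mu_gt0 : positive mu := positive_mu.
have lsm_mu : log_supermodular mu := log_supermodular_mu.
have mu0_gt0 : positive (pin mu ku false) by apply: positive_pin.
have lsm0 : log_supermodular (pin mu ku false) by apply: log_supermodular_pin.
have mono_odds_u : monotone (ratio mu ku) by apply: monotone_ratio.
apply: fcov_gt0 => //.
- exact: positive_pin.
- exact: log_supermodular_pin.
- exact: monotone_pin.
- exact: monotone_ratio.
- apply: fshift_gt0_jump; [exact: positive_pin | exact: log_supermodular_pin |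
                           exact: monotone_pin |].
  by move=> c; rewrite /pin !(updC _ _ _ kjv); apply: odds_strict.
- apply: fshift_gt0_jump; [exact: positive_pin | exact: log_supermodular_pin |
                           exact: monotone_ratio |].
  move=> c; rewrite /ratio /pin !(updC _ _ _ kvu) !(updC _ _ _ kju).
  exact: (odds_strict (upd c ku false) nz_v).
Qed.

(* The free sites [u] and [v] are peeled
   off in turn by [fcov_gt0_pivot], reducing to [odds_correlation_gt0]. *)
Lemma correlation_gt0 (S : {set 'I_n}) (z : config site) u v j :
  u \notin S -> v \notin S -> u != v -> J u j <> 0 -> J v j <> 0 ->
  0 < fcov (free_sites S) z mu (fun c => ind (c (inl u))) (fun c => ind (c (inl v))).
Proof.
move=> uS vS uv nz_u nz_v.
set ku : site := inl u; set kv : site := inl v.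
have kvu : kv != ku by apply: contra uv => /eqP[->].
have ku_free : ku \in free_sites S by rewrite inE.
have kv_free : kv \in free_sites S :\ ku by rewrite !inE kvu.
have kj_free : inr j \in free_sites S :\ ku :\ kv by rewrite !inE.
have mu_gt0 : positive mu := positive_mu.
have lsm_mu : log_supermodular mu := log_supermodular_mu.
rewrite -(setD1K ku_free); apply: fcov_gt0_pivot; rewrite ?in_setD1 ?eqxx //.
- exact: monotone_ind.
- exact: monotone_ind.
- by move=> c; apply: ind_jump.
rewrite -(setD1K kv_free); apply: fcov_gt0_pivot; rewrite ?in_setD1 ?eqxx //.
- by apply: positive_pin.
- by apply: log_supermodular_pin.
- by apply: monotone_pin; apply: monotone_ind.
- by apply: monotone_ratio.
- by move=> c; rewrite /pin !(updC _ _ _ kvu); apply: ind_jump.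
rewrite -(setD1K kj_free); apply: odds_correlation_gt0 => //.
by rewrite in_setD1 eqxx.
Qed.

Lemma fsum_free_sites (S : {set 'I_n}) (s : obs n) (F : obs n -> R) :
  fsum (free_sites S) (encode (s, [ffun => false])) (fun c => mu c * F (decode c).1) =
  \big[Rplus/0]_(x | agree S s x) \big[Rplus/0]_(y : lat m) (rbm_prob J h g x y * F x).
Proof.
rewrite /fsum (reindex encode); last first.
  by apply: onW_bij; exists decode; [apply: encodeK | apply: decodeK].
rewrite [RHS]pair_big; apply: eq_big => [[x y]|[x y] _]; last by rewrite /mu encodeK.
rewrite /= andbT; apply/forallP/forallP => fixed i.
  apply/implyP => iS; have := implyP (fixed (inl i)).
  by rewrite inE /= negbK iS !ffunE => /(_ isT).
case: i => [i|j] /=; rewrite inE //= negbK; apply/implyP => iS.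
by rewrite !ffunE; apply: (implyP (fixed i)).
Qed.

Lemma probX_fsum (S : {set 'I_n}) (s : obs n) (E : pred (obs n)) :
  probX J h g (fun x => E x && agree S s x) =
  fsum (free_sites S) (encode (s, [ffun => false])) (fun c => mu c * ind (E (decode c).1)).
Proof.
rewrite (fsum_free_sites S s (fun x => ind (E x))) /probX.
rewrite (eq_bigl (fun x => agree S s x && E x)); last first.
  by move=> x; rewrite andbC.
rewrite big_mkcondr /=; apply: eq_bigr => x _; rewrite /ind; case: (E x).
  by apply: eq_bigr => y _; rewrite Rmult_1_r.
by rewrite big1 // => y _; rewrite Rmult_0_r.
Qed.

Lemma probX_ext (E E' : pred (obs n)) :
  (forall x, E x = E' x) -> probX J h g E = probX J h g E'.
Proof. by move=> EE'; apply: eq_bigl. Qed.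

(* Conditional independence of [X_u] and [X_v] given [X_S] would make the
   correlation of the events "u is up" and "v is up" vanish on [X_S = 1]. *)
Lemma not_cond_indep (S : {set 'I_n}) u v j : u \notin S -> v \notin S -> u != v ->
  J u j <> 0 -> J v j <> 0 -> ~ cond_indep J h g u v S.
Proof.
move=> uS vS uv nz_u nz_v indep.
pose s : obs n := [ffun => true]; pose z := encode (s, [ffun => false]).
have to_probX (E : pred (obs n)) (f : config site -> R) :
    (forall c, f c = ind (E (decode c).1)) ->
    fsum (free_sites S) z (fun c => mu c * f c) = probX J h g (fun x => E x && agree S s x).
  by move=> fE; rewrite probX_fsum; apply: fsum_ext => c; rewrite fE.
have both : fsum (free_sites S) z (fun c => mu c * (ind (c (inl u)) * ind (c (inl v))))
    = probX J h g (fun x => [&& x u == true, x v == true & agree S s x]).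
  rewrite (probX_ext (E' := fun x => ((x u == true) && (x v == true)) && agree S s x)).
    by apply: to_probX => c; rewrite !ffunE; case: (c (inl u)); case: (c (inl v));
       rewrite /ind /=; ring.
  by move=> x; rewrite andbA.
have up_u : fsum (free_sites S) z (fun c => mu c * ind (c (inl u)))
    = probX J h g (fun x => (x u == true) && agree S s x).
  by apply: to_probX => c; rewrite ffunE; case: (c (inl u)).
have up_v : fsum (free_sites S) z (fun c => mu c * ind (c (inl v)))
    = probX J h g (fun x => (x v == true) && agree S s x).
  by apply: to_probX => c; rewrite ffunE; case: (c (inl v)).
have total : fsum (free_sites S) z mu = probX J h g (agree S s).
  rewrite (probX_ext (E' := fun x => true && agree S s x)) //.
  rewrite -(to_probX (fun=> true) (fun=> 1)) //.
  by apply: fsum_ext => c; rewrite Rmult_1_r.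
have := correlation_gt0 z uS vS uv nz_u nz_v.
by rewrite /fcov both up_u up_v total (indep true true s); lra.
Qed.

End Ferromagnet.

Lemma nzbP r : reflect (r <> 0) (nzb r).
Proof. by rewrite /nzb; case: Req_EM_T => [z|nz]; constructor. Qed.

Lemma nzbF r : nzb r = false -> r = 0.
Proof. by rewrite /nzb; case: Req_EM_T. Qed.

Section MarkovProperty.
Variables (n m : nat) (J : 'I_n -> 'I_m -> R) (h : 'I_n -> R) (g : 'I_m -> R).
Variable u : 'I_n.

Definition marginal (x : obs n) : R := \big[Rplus/0]_(y : lat m) rbm_prob J h g x y.

Definition coupling_energy (x : obs n) (y : lat m) : R :=
  \big[Rplus/0]_(i < n) \big[Rplus/0]_(j < m) (spin (x i) * J i j * spin (y j)).
Definition obs_field (x : obs n) : R := \big[Rplus/0]_(i < n) (h i * spin (x i)).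
Definition lat_field (y : lat m) : R := \big[Rplus/0]_(j < m) (g j * spin (y j)).
Definition rbm_energy (x : obs n) (y : lat m) : R :=
  coupling_energy x y + obs_field x + lat_field y.

Definition mix (a b : lat m) : lat m := [ffun j => if nzb (J u j) then a j else b j].

Lemma mixK : involutive (fun p : lat m * lat m => (mix p.2 p.1, mix p.1 p.2)).
Proof. by move=> [a b] /=; congr (_, _); apply/ffunP => j; rewrite !ffunE; case: nzb. Qed.

Lemma energy_swap (x z : obs n) (y y' : lat m) :
  (forall i, i \in N2 J u :\ u -> x i = z i) ->
  rbm_energy x y + rbm_energy z y' =
  rbm_energy (upd x u (z u)) (mix y' y) + rbm_energy (upd z u (x u)) (mix y y').
Proof.
move=> xz.
have pairs : coupling_energy x y + coupling_energy z y' =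
    coupling_energy (upd x u (z u)) (mix y' y) + coupling_energy (upd z u (x u)) (mix y y').
  rewrite /coupling_energy -!big_split; apply: eq_bigr => i _; rewrite -!big_split.
  apply: eq_bigr => j _ /=; rewrite !ffunE.
  case: (i =P u) => [->|/eqP iu].
    by case nz_uj: nzb; last rewrite (nzbF nz_uj); ring.
  case nz_ij: (nzb (J i j)); last by rewrite (nzbF nz_ij); ring.
  case nz_uj: nzb => //.
  rewrite xz; first exact: Rplus_comm.
  by rewrite !inE iu; apply/existsP; exists j; rewrite nz_ij nz_uj.
have fields_obs :
    obs_field x + obs_field z = obs_field (upd x u (z u)) + obs_field (upd z u (x u)).
  by rewrite /obs_field -!big_split; apply: eq_bigr => i _ /=; rewrite !updE;
     case: eqP => [->|_] //; ring.
have fields_lat : lat_field y + lat_field y' = lat_field (mix y' y) + lat_field (mix y y').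
  by rewrite /lat_field -!big_split; apply: eq_bigr => j _ /=; rewrite !ffunE;
     case: nzb => //; ring.
rewrite /rbm_energy; lra.
Qed.

Lemma prob_energy (x : obs n) (y : lat m) :
  rbm_prob J h g x y = exp (rbm_energy x y) / rbm_Z J h g.
Proof. by []. Qed.

Lemma marginal_swap (x z : obs n) :
  (forall i, i \in N2 J u :\ u -> x i = z i) ->
  marginal x * marginal z = marginal (upd x u (z u)) * marginal (upd z u (x u)).
Proof.
move=> xz; rewrite /marginal !sumR_mulr.
under eq_bigr do rewrite sumR_mull.
under [RHS]eq_bigr do rewrite sumR_mull.
rewrite !pair_big.
rewrite [RHS](reindex (fun p : lat m * lat m => (mix p.2 p.1, mix p.1 p.2))); last first.
  by apply: onW_bij; apply: inv_bij; apply: mixK.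
by apply: eq_bigr => [[y y']] _ /=; rewrite !prob_energy !exp_sum_div (energy_swap y y' xz).
Qed.

Lemma agree_upd (S : {set 'I_n}) (s x : obs n) b :
  u \notin S -> agree S s (upd x u b) = agree S s x.
Proof.
move=> uS; apply: eq_forallb => i; case: (boolP (i \in S)) => //= iS.
by rewrite updE; case: (i =P u) => // iu; rewrite -iu iS in uS.
Qed.

Definition swap_u (p : obs n * obs n) : obs n * obs n :=
  (upd p.1 u (p.2 u), upd p.2 u (p.1 u)).

Lemma swap_uK : involutive swap_u.
Proof. by move=> [x z]; rewrite /swap_u /= !updE !eqxx !upd_upd !upd_id. Qed.

(* Markov property: [N_2(u) \ u] separates [u] from the other observed
   nodes. The two products of the conditional-independence identity are
   sums over pairs of configurations exchanged by [swap_u]. *)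
Lemma cond_indep_N2 v : v != u -> cond_indep J h g u v (N2 J u :\ u).
Proof.
move=> vu a b s; set S := N2 J u :\ u.
have uS : u \notin S by rewrite !inE eqxx.
rewrite [RHS]Rmult_comm /probX !sumR_mulr.
under eq_bigr do rewrite sumR_mull.
under [RHS]eq_bigr do rewrite sumR_mull.
rewrite !pair_big_dep [RHS](reindex swap_u); last first.
  by apply: onW_bij; apply: inv_bij; apply: swap_uK.
apply: eq_big => [[x z]|[x z]] /=.
  rewrite !agree_upd // !updE eqxx (negbTE vu).
  by case: (x u == a); case: (x v == b); case: (agree S s x); case: (agree S s z).
case/andP => /and3P[_ _ agree_x] agree_z; apply: marginal_swap => i iS.
by rewrite (eqP (implyP (forallP agree_x i) iS)) (eqP (implyP (forallP agree_z i) iS)).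
Qed.

End MarkovProperty.

Theorem mainTheorem4 (n m : nat) (J : 'I_n -> 'I_m -> R) (h : 'I_n -> R)
    (g : 'I_m -> R) (alpha lambda : R) :
  Rlt 0 alpha ->
  locally_consistent J h g alpha lambda ->
  forall u : 'I_n, is_two_hop_markov_nbhd J h g u (N2 J u :\ u).
Proof.
move=> _ [sign_consistent _] u; split.
  split; first by rewrite !inE eqxx.
  by move=> v vu _; apply: cond_indep_N2.
move=> S [uS separates]; apply/subsetP => v.
rewrite !inE => /andP[vu /existsP[j /andP[nz_vj nz_uj]]].
apply/negPn/negP => vS; have uv : u != v by rewrite eq_sym.
apply: (not_cond_indep sign_consistent uS vS uv (j := j)) (separates v vu vS).
  exact/nzbP.
exact/nzbP.
Qed.
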